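(* Let $T\subset\mathbb{R}^2$ be a triangle and let $\Lambda\subset\mathbb{R}^2$ be a $2$-dimensional lattice. If $T$ is lattice complete with respect to $\Lambda$, then $T$ is lattice reduced with respect to $\Lambda$. The converse does not hold: there exist a $2$-dimensional lattice and a triangle that is lattice reduced but not lattice complete with respect to it.
   Context: A lattice $\Lambda\subset\mathbb{R}^2$ is a discrete subgroup spanning $\mathbb{R}^2$, with dual lattice $\Lambda^\star=\{y: x\cdot y\in\mathbb{Z}\ \forall x\in\Lambda\}$. For a convex body $C$ (compact convex set with non-empty interior), the lattice width is $\mathrm{wdt}_\Lambda(C)=\min_{y\in\Lambda^\star\setminus\{0\}}\max_{a,b\in C}y\cdot(a-b)$. A segment $[a,b]$ is a lattice segment if $b-a$ is parallel to a nonzero vector of $\Lambda$; its lattice length is $|b-a|/|v|$ where $v$ generates $\Lambda\cap\mathrm{span}\{b-a\}$ and is a positive multiple of $b-a$. The lattice diameter $\mathrm{diam}_\Lambda(C)$ is the maximum lattice length of a lattice segment in $C$. $C$ is lattice reduced if no convex body $C'\subsetneq C$ has $\mathrm{wdt}_\Lambda(C')=\mathrm{wdt}_\Lambda(C)$; lattice complete if no convex body $C'\supsetneq C$ has $\mathrm{diam}_\Lambda(C')=\mathrm{diam}_\Lambda(C)$. *)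

From Stdlib Require Import Reals ZArith.
From Coquelicot Require Import Coquelicot.
Open Scope R_scope.

Definition pt := (R * R)%type.

Definition vadd (x y : pt) : pt := (fst x + fst y, snd x + snd y).
Definition vsub (x y : pt) : pt := (fst x - fst y, snd x - snd y).
Definition vscale (t : R) (x : pt) : pt := (t * fst x, t * snd x).
Definition dot (x y : pt) : R := fst x * fst y + snd x * snd y.
Definition vnorm (x : pt) : R := sqrt (dot x x).
Definition det2 (x y : pt) : R := fst x * snd y - snd x * fst y.
Definition origin : pt := (0, 0).

Definition is_lattice (L : pt -> Prop) : Prop :=
  L origin /\
  (forall x y, L x -> L y -> L (vsub x y)) /\
  (forall x, L x -> exists eps, eps > 0 /\
       forall y, L y -> vnorm (vsub y x) < eps -> y = x) /\
  (exists u v, L u /\ L v /\ det2 u v <> 0).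

Definition dual (L : pt -> Prop) (y : pt) : Prop :=
  forall x, L x -> exists k : Z, dot x y = IZR k.

Definition convex (C : pt -> Prop) : Prop :=
  forall a b t, C a -> C b -> 0 <= t <= 1 -> C (vadd a (vscale t (vsub b a))).
Definition bounded (C : pt -> Prop) : Prop :=
  exists M, forall x, C x -> vnorm x <= M.
Definition closed_set (C : pt -> Prop) : Prop :=
  forall x, (forall eps, eps > 0 -> exists y, C y /\ vnorm (vsub y x) < eps) -> C x.
Definition nonempty_interior (C : pt -> Prop) : Prop :=
  exists x eps, eps > 0 /\ forall y, vnorm (vsub y x) < eps -> C y.
Definition convex_body (C : pt -> Prop) : Prop :=
  convex C /\ bounded C /\ closed_set C /\ nonempty_interior C.

Definition strict_subset (A B : pt -> Prop) : Prop :=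
  (forall x, A x -> B x) /\ exists x, B x /\ ~ A x.

Definition dir_width (C : pt -> Prop) (y : pt) : Rbar :=
  Lub_Rbar (fun w => exists a b, C a /\ C b /\ w = dot y (vsub a b)).

Definition lattice_width (L C : pt -> Prop) : Rbar :=
  Glb_Rbar (fun w => exists y, dual L y /\ y <> origin /\ dir_width C y = Finite w).

Definition lattice_segment_length (L : pt -> Prop) (a b : pt) (t : R) : Prop :=
  a <> b /\
  exists v, L v /\ v <> origin /\
    (exists s, s > 0 /\ v = vscale s (vsub b a)) /\
    (forall x, L x -> (exists r, x = vscale r (vsub b a)) ->
        exists k : Z, x = vscale (IZR k) v) /\
    t = vnorm (vsub b a) / vnorm v.

Definition lattice_diam (L C : pt -> Prop) : Rbar :=
  Lub_Rbar (fun t => exists a b, C a /\ C b /\ lattice_segment_length L a b t).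

Definition lattice_reduced (L C : pt -> Prop) : Prop :=
  forall C', convex_body C' -> strict_subset C' C ->
    lattice_width L C' <> lattice_width L C.

Definition lattice_complete (L C : pt -> Prop) : Prop :=
  forall C', convex_body C' -> strict_subset C C' ->
    lattice_diam L C' <> lattice_diam L C.

Definition triangle_hull (p q r : pt) (x : pt) : Prop :=
  exists l1 l2 l3, 0 <= l1 /\ 0 <= l2 /\ 0 <= l3 /\ l1 + l2 + l3 = 1 /\
    x = vadd (vscale l1 p) (vadd (vscale l2 q) (vscale l3 r)).

Definition noncollinear (p q r : pt) : Prop := det2 (vsub q p) (vsub r p) <> 0.

(* Let T = conv(p, q, r) have lattice diameter d and edge vectors A = q - p, B = r - p.  In
   the coordinates of the basis (A, B) the difference body T - T is the hexagon
   |a|, |b|, |a + b| <= 1, and no nonzero lattice vector z has d z in its interior, for a dilate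
   of d z would be a longer lattice chord of T.  If T is complete, enlarging it slightly beyond
   the edge qr must create a longer chord; letting the enlargement shrink produces a lattice
   vector u with d u = (1 - s) A + s B pointing from p to the edge qr, and likewise for the other
   two edges.  The hexagon condition forces the three edge parameters to coincide and makes two
   of these vectors a lattice basis.  The dual basis vector then realises the lattice width of T
   with p as its unique minimiser, and similarly at q and r.  A convex body strictly inside T
   misses a vertex, so its width in the corresponding direction is smaller: T is reduced.  The
   converse fails for the standard triangle and Z^2: it is reduced, but the unit square has the
   same lattice diameter 1. *)

From Pilot Require Import Defs.
From Stdlib Require Import Reals ZArith Lra Lia Psatz.
From Stdlib Require Import Classical FunctionalExtensionality PropExtensionality.
From Coquelicot Require Import Coquelicot.
Open Scope R_scope.

Lemma pt_eq (x y : pt) : fst x = fst y -> snd x = snd y -> x = y.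
Proof. destruct x, y; simpl; intros -> ->; reflexivity. Qed.

Ltac pt_ring := apply pt_eq; unfold vadd, vsub, vscale, origin; simpl; ring.
Ltac pt_field := apply pt_eq; unfold vadd, vsub, vscale, origin; simpl; field.

Lemma vnorm_nonneg w : 0 <= vnorm w.
Proof. apply sqrt_pos. Qed.

Lemma vnorm_origin : vnorm origin = 0.
Proof. unfold vnorm, dot, origin; simpl. rewrite Rmult_0_l, Rplus_0_l. apply sqrt_0. Qed.

Lemma vnorm_pos w : w <> origin -> 0 < vnorm w.
Proof.
  intros Hw. apply sqrt_lt_R0. destruct w as [a b]. unfold dot; simpl.
  destruct (Req_dec a 0) as [-> | Ha]; [destruct (Req_dec b 0) as [-> | Hb] |].
  - contradiction.
  - nra.
  - nra.
Qed.

Lemma vnorm_scale k w : vnorm (vscale k w) = Rabs k * vnorm w.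
Proof.
  unfold vnorm, dot, vscale; simpl. rewrite <- sqrt_Rsqr_abs, <- sqrt_mult by (unfold Rsqr; nra).
  f_equal. unfold Rsqr. ring.
Qed.

Lemma Rabs_fst_le_vnorm w : Rabs (fst w) <= vnorm w.
Proof. unfold vnorm, dot. rewrite <- sqrt_Rsqr_abs. apply sqrt_le_1_alt. unfold Rsqr. nra. Qed.

Lemma Rabs_snd_le_vnorm w : Rabs (snd w) <= vnorm w.
Proof. unfold vnorm, dot. rewrite <- sqrt_Rsqr_abs. apply sqrt_le_1_alt. unfold Rsqr. nra. Qed.

Lemma vnorm_triang u v : vnorm (vadd u v) <= vnorm u + vnorm v.
Proof.
  pose proof (vnorm_nonneg u); pose proof (vnorm_nonneg v).
  assert (Hu : vnorm u * vnorm u = dot u u) by (apply sqrt_sqrt; unfold dot; nra).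
  assert (Hv : vnorm v * vnorm v = dot v v) by (apply sqrt_sqrt; unfold dot; nra).
  assert (Hcs : dot u v <= vnorm u * vnorm v)
    by exact (sqrt_cauchy (fst u) (snd u) (fst v) (snd v)).
  unfold vnorm at 1. rewrite <- (sqrt_Rsqr (vnorm u + vnorm v)) by lra. apply sqrt_le_1_alt.
  replace (dot (vadd u v) (vadd u v)) with (dot u u + 2 * dot u v + dot v v)
    by (unfold dot, vadd; simpl; ring).
  unfold Rsqr. nra.
Qed.

Lemma Rabs_det2_le u v : Rabs (det2 u v) <= vnorm u * vnorm v.
Proof.
  assert (H1 := sqrt_cauchy (fst u) (snd u) (snd v) (- fst v)).
  assert (H2 := sqrt_cauchy (fst u) (snd u) (- snd v) (fst v)).
  unfold vnorm, dot, det2, Rsqr in *.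
  replace (snd v * snd v + - fst v * - fst v) with (fst v * fst v + snd v * snd v) in H1 by ring.
  replace (- snd v * - snd v + fst v * fst v) with (fst v * fst v + snd v * snd v) in H2 by ring.
  apply Rabs_le. lra.
Qed.

Lemma vsub_eq_origin x y : vsub x y = origin -> x = y.
Proof.
  destruct x, y; unfold vsub, origin; simpl; intros H; injection H; intros.
  apply pt_eq; simpl; lra.
Qed.

Lemma vscale_inj_l a b z : z <> origin -> vscale a z = vscale b z -> a = b.
Proof.
  intros Hz H. destruct z as [z1 z2]. unfold vscale in H; simpl in H. injection H; intros H2 H1.
  destruct (Req_dec z1 0) as [-> | Hz1].
  - destruct (Req_dec z2 0) as [-> | Hz2]; [contradiction|].
    apply Rmult_eq_reg_r with z2; auto.
  - apply Rmult_eq_reg_r with z1; auto.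
Qed.

Lemma vscale_neq_origin a z : a <> 0 -> z <> origin -> vscale a z <> origin.
Proof.
  intros Ha Hz H. apply Ha, (vscale_inj_l a 0 z Hz). rewrite H. pt_ring.
Qed.

Lemma dot_comb a u b v y : dot y (vadd (vscale a u) (vscale b v)) = a * dot y u + b * dot y v.
Proof. unfold dot, vadd, vscale; simpl; ring. Qed.

Lemma IZR_neq0_cases k : k <> 0%Z -> 1 <= IZR k \/ IZR k <= -1.
Proof.
  intros Hk. destruct (Z_lt_le_dec 0 k).
  - left. apply (IZR_le 1 k). lia.
  - right. apply (IZR_le k (-1)). lia.
Qed.

Lemma IZR_Rabs_ge1 k : k <> 0%Z -> 1 <= Rabs (IZR k).
Proof.
  intros Hk. destruct (IZR_neq0_cases k Hk); [rewrite Rabs_pos_eq | rewrite Rabs_left]; lra.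
Qed.

Lemma IZR_Rabs_lt1 k : Rabs (IZR k) < 1 -> k = 0%Z.
Proof.
  intros H. destruct (Z.eq_dec k 0) as [|Hk]; auto. pose proof (IZR_Rabs_ge1 k Hk). lra.
Qed.

Lemma Lub_Rbar_ub (E : R -> Prop) x : E x -> Rbar_le x (Lub_Rbar E).
Proof. intros Hx. apply (proj1 (Lub_Rbar_correct E)), Hx. Qed.

Lemma Lub_Rbar_le_ub (E : R -> Prop) M : (forall x, E x -> x <= M) -> Rbar_le (Lub_Rbar E) M.
Proof. intros H. apply (proj2 (Lub_Rbar_correct E)). exact H. Qed.

Lemma Glb_Rbar_lb (E : R -> Prop) x : E x -> Rbar_le (Glb_Rbar E) x.
Proof. intros Hx. apply (proj1 (Glb_Rbar_correct E)), Hx. Qed.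

Lemma Glb_Rbar_ge_lb (E : R -> Prop) M : (forall x, E x -> M <= x) -> Rbar_le M (Glb_Rbar E).
Proof. intros H. apply (proj2 (Glb_Rbar_correct E)). exact H. Qed.

Lemma Lub_Rbar_finite (E : R -> Prop) x0 M : E x0 -> (forall x, E x -> x <= M) ->
  exists l, Lub_Rbar E = Finite l /\ x0 <= l <= M.
Proof.
  intros H0 H. pose proof (Lub_Rbar_ub E x0 H0). pose proof (Lub_Rbar_le_ub E M H).
  destruct (Lub_Rbar E); simpl in *; try contradiction. eauto.
Qed.

Lemma Lub_Rbar_max (E : R -> Prop) w : E w -> (forall x, E x -> x <= w) -> Lub_Rbar E = Finite w.
Proof.
  intros H0 H. destruct (Lub_Rbar_finite E w w H0 H) as [l [-> Hl]]. f_equal. lra.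
Qed.

Lemma Glb_Rbar_min (E : R -> Prop) w : E w -> (forall x, E x -> w <= x) -> Glb_Rbar E = Finite w.
Proof.
  intros H0 H. pose proof (Glb_Rbar_lb E w H0). pose proof (Glb_Rbar_ge_lb E w H).
  destruct (Glb_Rbar E); simpl in *; try contradiction. f_equal. lra.
Qed.

(** * Lattices and primitive vectors *)

Definition primitive_vector (L : pt -> Prop) (g : pt) : Prop :=
  L g /\ g <> origin /\
  forall x, L x -> (exists r, x = vscale r g) -> exists k : Z, x = vscale (IZR k) g.

Section Lattice.

Variable L : pt -> Prop.
Hypothesis HL : is_lattice L.

Lemma lattice_origin : L origin.
Proof. apply HL. Qed.

Lemma lattice_sub x y : L x -> L y -> L (vsub x y).
Proof. apply HL. Qed.

Lemma lattice_opp x : L x -> L (vscale (-1) x).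
Proof.
  intros Hx. replace (vscale (-1) x) with (vsub origin x) by pt_ring.
  apply lattice_sub; auto using lattice_origin.
Qed.

Lemma lattice_add x y : L x -> L y -> L (vadd x y).
Proof.
  intros Hx Hy. replace (vadd x y) with (vsub x (vscale (-1) y)) by pt_ring.
  auto using lattice_sub, lattice_opp.
Qed.

Lemma lattice_zscale k x : L x -> L (vscale (IZR k) x).
Proof.
  intros Hx. induction k as [|k IH|k IH] using Z.peano_ind.
  - replace (vscale 0 x) with origin by pt_ring. apply lattice_origin.
  - replace (vscale (IZR (Z.succ k)) x) with (vadd (vscale (IZR k) x) x)
      by (rewrite succ_IZR; pt_ring).
    auto using lattice_add.
  - replace (vscale (IZR (Z.pred k)) x) with (vsub (vscale (IZR k) x) x)
      by (unfold Z.pred; rewrite plus_IZR; pt_ring).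
    auto using lattice_sub.
Qed.

Lemma lattice_norm_lb : exists r, 0 < r /\ forall x, L x -> x <> origin -> r <= vnorm x.
Proof.
  destruct HL as [H0 [_ [Hdisc _]]]. destruct (Hdisc origin H0) as [r [Hr Hsep]].
  exists r. split; [lra|]. intros x Hx Hx0.
  destruct (Rlt_le_dec (vnorm x) r) as [Hlt|]; auto.
  exfalso. apply Hx0, Hsep; auto. replace (vsub x origin) with x by pt_ring. exact Hlt.
Qed.

Lemma lattice_line_min z : L z -> z <> origin ->
  exists s0, 0 < s0 /\ L (vscale s0 z) /\ forall s, 0 < s -> L (vscale s z) -> s0 <= s.
Proof.
  intros Hz Hz0. destruct lattice_norm_lb as [r [Hr Hsep]].
  pose proof (vnorm_pos z Hz0) as Hnz.
  set (S := fun s => 0 < s /\ L (vscale s z)).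
  set (delta := r / vnorm z).
  assert (Hdelta : 0 < delta) by (apply Rdiv_lt_0_compat; lra).
  assert (Hgap : forall s s', L (vscale s z) -> L (vscale s' z) -> s < s' -> delta <= s' - s).
  { intros s s' Hs Hs' Hlt.
    assert (Hle : r <= vnorm (vscale (s' - s) z)).
    { apply Hsep.
      - replace (vscale (s' - s) z) with (vsub (vscale s' z) (vscale s z)) by pt_ring.
        auto using lattice_sub.
      - apply vscale_neq_origin; auto; lra. }
    rewrite vnorm_scale, Rabs_pos_eq in Hle by lra.
    unfold delta. apply Rmult_le_reg_r with (vnorm z); auto.
    unfold Rdiv. rewrite Rmult_assoc, Rinv_l; lra. }
  assert (Hlb : forall s, S s -> delta <= s).
  { intros s [Hs Ls]. replace s with (s - 0) by ring. apply Hgap; auto.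
    replace (vscale 0 z) with origin by pt_ring. apply lattice_origin. }
  assert (HS1 : S 1) by (split; [lra|]; replace (vscale 1 z) with z by pt_ring; exact Hz).
  destruct (Glb_Rbar S) as [m| |] eqn:Hm;
    [| pose proof (Glb_Rbar_lb S 1 HS1) as H; rewrite Hm in H; contradiction
     | pose proof (Glb_Rbar_ge_lb S delta Hlb) as H; rewrite Hm in H; contradiction].
  assert (Happrox : exists s1, S s1 /\ s1 < m + delta).
  { apply NNPP. intros Hno.
    pose proof (Glb_Rbar_ge_lb S (m + delta)) as H. rewrite Hm in H. simpl in H.
    enough (m + delta <= m) by lra. apply H. intros s Hs.
    destruct (Rlt_le_dec s (m + delta)); auto. exfalso. eauto. }
  destruct Happrox as [s1 [HS1' Hs1]].
  exists s1. destruct HS1' as [Hs1pos Ls1]. split; [lra|]. split; [exact Ls1|].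
  intros s Hs Ls. destruct (Rle_lt_dec s1 s) as [|Hlt]; auto. exfalso.
  pose proof (Glb_Rbar_lb S s (conj Hs Ls)) as Hms. rewrite Hm in Hms. simpl in Hms.
  pose proof (Hgap s s1 Ls Ls1 Hlt). lra.
Qed.

Lemma lattice_primitive_multiple z : L z -> z <> origin ->
  exists g k, primitive_vector L g /\ (1 <= k)%Z /\ z = vscale (IZR k) g.
Proof.
  intros Hz Hz0. destruct (lattice_line_min z Hz Hz0) as [s0 [Hs0 [Lg Hmin]]].
  set (g := vscale s0 z) in *.
  assert (Hint : forall x rho, L x -> x = vscale rho g -> exists k : Z, x = vscale (IZR k) g).
  { intros x rho Hx ->. exists (Zfloor rho).
    pose proof (Zfloor_bound rho) as Hfl. set (k := Zfloor rho) in *.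
    assert (Lfrac : L (vscale ((rho - IZR k) * s0) z)).
    { replace (vscale ((rho - IZR k) * s0) z) with (vsub (vscale rho g) (vscale (IZR k) g))
        by (unfold g; pt_ring).
      auto using lattice_sub, lattice_zscale. }
    destruct (Req_dec rho (IZR k)) as [Heq | Hne]; [now rewrite <- Heq|].
    exfalso. assert (s0 <= (rho - IZR k) * s0) by (apply Hmin; auto; apply Rmult_lt_0_compat; lra).
    nra. }
  destruct (Hint z (/ s0) Hz) as [k Hk]; [unfold g; pt_field; lra|].
  exists g, k. split; [|split; auto].
  - split; [exact Lg|]. split; [apply vscale_neq_origin; auto; lra|].
    intros x Hx [rho ->]. eauto.
  - assert (Hks : IZR k * s0 = 1).
    { apply (vscale_inj_l _ _ z Hz0). rewrite Hk at 2. unfold g. pt_ring. }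
    assert (Hk0 : 0 < IZR k) by nra. apply lt_0_IZR in Hk0. lia.
Qed.

End Lattice.

(** * Lattice chords *)

Definition lattice_chord (L C : pt -> Prop) (t : R) : Prop :=
  exists a b, C a /\ C b /\ lattice_segment_length L a b t.

Lemma lattice_segment_length_dir L a b t : lattice_segment_length L a b t ->
  exists v, L v /\ v <> origin /\ 0 < t /\ vsub b a = vscale t v.
Proof.
  intros [_ [v [Lv [Hv0 [[s [Hs Hvs]] [_ Ht]]]]]].
  assert (Hba : vsub b a = vscale (/ s) v) by (rewrite Hvs; pt_field; lra).
  pose proof (vnorm_pos v Hv0).
  assert (Ht' : t = / s).
  { rewrite Ht, Hba, vnorm_scale, Rabs_pos_eq by (apply Rlt_le, Rinv_0_lt_compat; lra).
    field. lra. }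
  rewrite Ht'. exists v. repeat split; auto. apply Rinv_0_lt_compat; lra.
Qed.

Lemma lattice_segment_length_intro L g a b t : primitive_vector L g -> 0 < t ->
  vsub b a = vscale t g -> lattice_segment_length L a b t.
Proof.
  intros [Lg [Hg Hprim]] Ht Hba. split.
  { intros ->. apply (vscale_neq_origin t g); [lra | auto |].
    rewrite <- Hba. pt_ring. }
  exists g. split; [exact Lg|]. split; [exact Hg|]. split; [|split].
  - exists (/ t). split; [apply Rinv_0_lt_compat; lra|]. rewrite Hba. pt_field; lra.
  - intros x Lx [rho ->]. apply Hprim; auto. exists (rho * t). rewrite Hba. pt_ring.
  - rewrite Hba, vnorm_scale, Rabs_pos_eq by lra. pose proof (vnorm_pos g Hg). field. lra.
Qed.

Lemma lattice_diam_mono L C C' : (forall x, C x -> C' x) ->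
  Rbar_le (lattice_diam L C) (lattice_diam L C').
Proof.
  intros H. apply Lub_Rbar_correct. intros t [a [b [Ca [Cb Hs]]]].
  apply Lub_Rbar_ub. exists a, b. auto.
Qed.

Lemma lattice_chord_bounded L C : is_lattice L -> Defs.bounded C ->
  exists M, forall t, lattice_chord L C t -> t <= M.
Proof.
  intros HL [M HM]. destruct (lattice_norm_lb L HL) as [r [Hr Hlb]].
  exists (2 * M / r). intros t [a [b [Ca [Cb Hs]]]].
  destruct (lattice_segment_length_dir L a b t Hs) as [v [Lv [Hv0 [Ht Hba]]]].
  pose proof (Hlb v Lv Hv0). pose proof (HM a Ca). pose proof (HM b Cb).
  assert (Hlen : t * vnorm v <= 2 * M).
  { rewrite <- (Rabs_pos_eq t), <- vnorm_scale, <- Hba by lra.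
    replace (vsub b a) with (vadd b (vscale (-1) a)) by pt_ring.
    eapply Rle_trans; [apply vnorm_triang|].
    rewrite vnorm_scale, Rabs_m1. lra. }
  apply Rmult_le_reg_r with r; auto. unfold Rdiv. rewrite Rmult_assoc, Rinv_l by lra.
  nra.
Qed.

Lemma lattice_diam_finite L C : is_lattice L -> Defs.bounded C -> nonempty_interior C ->
  exists d, 0 < d /\ lattice_diam L C = Finite d.
Proof.
  intros HL Hb [x0 [eps [Heps Hball]]].
  destruct (lattice_chord_bounded L C HL Hb) as [M HM].
  pose proof HL as [_ [_ [_ [u [v [Lu [_ Huv]]]]]]].
  assert (Hu : u <> origin) by (intros ->; apply Huv; unfold det2, origin; simpl; ring).
  destruct (lattice_primitive_multiple L HL u Lu Hu) as [g [_ [Hg _]]].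
  pose proof (vnorm_pos g (proj1 (proj2 Hg))) as Hng.
  set (t := eps / (2 * vnorm g)).
  assert (Ht : 0 < t) by (apply Rdiv_lt_0_compat; lra).
  assert (Hchord : lattice_chord L C t).
  { exists x0, (vadd x0 (vscale t g)). split; [|split].
    - apply Hball. replace (vsub x0 x0) with origin by pt_ring. rewrite vnorm_origin. lra.
    - apply Hball. replace (vsub (vadd x0 (vscale t g)) x0) with (vscale t g) by pt_ring.
      rewrite vnorm_scale, Rabs_pos_eq by lra. unfold t. field_simplify; lra.
    - apply (lattice_segment_length_intro L g); auto. pt_ring. }
  destruct (Lub_Rbar_finite _ t M Hchord HM) as [d [Hd [Htd _]]].
  exists d. split; [lra | exact Hd].
Qed.

(** * Coordinates *)

Definition coord1 (A B w : pt) : R := det2 w B / det2 A B.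
Definition coord2 (A B w : pt) : R := det2 A w / det2 A B.

Section Coordinates.

Variables A B : pt.
Hypothesis HAB : det2 A B <> 0.

Ltac coord_field :=
  unfold coord1, coord2, det2, vadd, vsub, vscale in *; simpl; field; exact HAB.

Lemma coord_decomp w : w = vadd (vscale (coord1 A B w) A) (vscale (coord2 A B w) B).
Proof. apply pt_eq; coord_field. Qed.

Lemma coord1_comb a b : coord1 A B (vadd (vscale a A) (vscale b B)) = a.
Proof. coord_field. Qed.

Lemma coord2_comb a b : coord2 A B (vadd (vscale a A) (vscale b B)) = b.
Proof. coord_field. Qed.

Lemma coord1_scale k w : coord1 A B (vscale k w) = k * coord1 A B w.
Proof. coord_field. Qed.

Lemma coord2_scale k w : coord2 A B (vscale k w) = k * coord2 A B w.
Proof. coord_field. Qed.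

Lemma coord1_sub u v : coord1 A B (vsub u v) = coord1 A B u - coord1 A B v.
Proof. coord_field. Qed.

Lemma coord2_sub u v : coord2 A B (vsub u v) = coord2 A B u - coord2 A B v.
Proof. coord_field. Qed.

Lemma Rabs_coord1_le w : Rabs (coord1 A B w) <= (vnorm B / Rabs (det2 A B)) * vnorm w.
Proof.
  unfold coord1, Rdiv. rewrite Rabs_mult, Rabs_inv.
  pose proof (Rabs_det2_le w B). pose proof (Rabs_pos_lt _ HAB).
  apply Rle_trans with (vnorm w * vnorm B * / Rabs (det2 A B)); [|right; ring].
  apply Rmult_le_compat_r; [apply Rlt_le, Rinv_0_lt_compat|]; auto.
Qed.

Lemma Rabs_coord2_le w : Rabs (coord2 A B w) <= (vnorm A / Rabs (det2 A B)) * vnorm w.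
Proof.
  unfold coord2, Rdiv. rewrite Rabs_mult, Rabs_inv.
  assert (Hdet : Rabs (det2 A w) = Rabs (det2 w A))
    by (rewrite <- Rabs_Ropp; f_equal; unfold det2; ring).
  pose proof (Rabs_det2_le w A). pose proof (Rabs_pos_lt _ HAB).
  apply Rle_trans with (vnorm w * vnorm A * / Rabs (det2 A B)); [|right; ring].
  rewrite Hdet. apply Rmult_le_compat_r; [apply Rlt_le, Rinv_0_lt_compat|]; auto.
Qed.

End Coordinates.

Definition bary_q (p q r x : pt) : R := coord1 (vsub q p) (vsub r p) (vsub x p).
Definition bary_r (p q r x : pt) : R := coord2 (vsub q p) (vsub r p) (vsub x p).

Definition point_of_bary (p q r : pt) (a b : R) : pt :=
  vadd p (vadd (vscale a (vsub q p)) (vscale b (vsub r p))).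

Section Barycentric.

Variables p q r : pt.
Hypothesis Hpqr : noncollinear p q r.

Lemma bary_point_of_bary a b :
  bary_q p q r (point_of_bary p q r a b) = a /\ bary_r p q r (point_of_bary p q r a b) = b.
Proof.
  unfold bary_q, bary_r, point_of_bary.
  replace (vsub (vadd p (vadd (vscale a (vsub q p)) (vscale b (vsub r p)))) p)
    with (vadd (vscale a (vsub q p)) (vscale b (vsub r p))) by pt_ring.
  split; [apply coord1_comb | apply coord2_comb]; exact Hpqr.
Qed.

Lemma point_of_bary_bary x : x = point_of_bary p q r (bary_q p q r x) (bary_r p q r x).
Proof.
  unfold point_of_bary, bary_q, bary_r.
  rewrite <- (coord_decomp _ _ Hpqr (vsub x p)). pt_ring.
Qed.

Lemma coord1_vsub_bary a b :
  coord1 (vsub q p) (vsub r p) (vsub b a) = bary_q p q r b - bary_q p q r a.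
Proof.
  unfold bary_q. rewrite <- coord1_sub by exact Hpqr. f_equal. pt_ring.
Qed.

Lemma coord2_vsub_bary a b :
  coord2 (vsub q p) (vsub r p) (vsub b a) = bary_r p q r b - bary_r p q r a.
Proof.
  unfold bary_r. rewrite <- coord2_sub by exact Hpqr. f_equal. pt_ring.
Qed.

Lemma bary_q_segment a b t :
  bary_q p q r (vadd a (vscale t (vsub b a))) =
  bary_q p q r a + t * (bary_q p q r b - bary_q p q r a).
Proof.
  unfold bary_q, coord1, det2, vadd, vsub, vscale, noncollinear in *; simpl. field.
  unfold det2, vsub in Hpqr. exact Hpqr.
Qed.

Lemma bary_r_segment a b t :
  bary_r p q r (vadd a (vscale t (vsub b a))) =
  bary_r p q r a + t * (bary_r p q r b - bary_r p q r a).
Proof.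
  unfold bary_r, coord2, det2, vadd, vsub, vscale, noncollinear in *; simpl. field.
  unfold det2, vsub in Hpqr. exact Hpqr.
Qed.

Lemma triangle_hull_iff x : triangle_hull p q r x <->
  0 <= bary_q p q r x /\ 0 <= bary_r p q r x /\ bary_q p q r x + bary_r p q r x <= 1.
Proof.
  split.
  - intros [l1 [l2 [l3 [H1 [H2 [H3 [H4 ->]]]]]]].
    replace (vadd (vscale l1 p) (vadd (vscale l2 q) (vscale l3 r))) with (point_of_bary p q r l2 l3)
      by (unfold point_of_bary; replace l1 with (1 - l2 - l3) by lra; pt_ring).
    destruct (bary_point_of_bary l2 l3) as [-> ->]. lra.
  - intros Hx. exists (1 - bary_q p q r x - bary_r p q r x), (bary_q p q r x), (bary_r p q r x).
    repeat split; try lra.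
    rewrite (point_of_bary_bary x) at 1. unfold point_of_bary. pt_ring.
Qed.

Lemma bary_lipschitz : exists K, 0 <= K /\ forall x y,
  Rabs (bary_q p q r y - bary_q p q r x) <= K * vnorm (vsub y x) /\
  Rabs (bary_r p q r y - bary_r p q r x) <= K * vnorm (vsub y x).
Proof.
  set (K1 := vnorm (vsub r p) / Rabs (det2 (vsub q p) (vsub r p))).
  set (K2 := vnorm (vsub q p) / Rabs (det2 (vsub q p) (vsub r p))).
  pose proof (Rabs_pos_lt _ Hpqr).
  assert (0 <= K1) by (apply Rdiv_le_0_compat; [apply vnorm_nonneg | lra]).
  assert (0 <= K2) by (apply Rdiv_le_0_compat; [apply vnorm_nonneg | lra]).
  exists (K1 + K2). split; [lra|]. intros x y. pose proof (vnorm_nonneg (vsub y x)).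
  rewrite <- coord1_vsub_bary, <- coord2_vsub_bary.
  assert (Rabs (coord1 (vsub q p) (vsub r p) (vsub y x)) <= K1 * vnorm (vsub y x))
    by apply (Rabs_coord1_le _ _ Hpqr).
  assert (Rabs (coord2 (vsub q p) (vsub r p) (vsub y x)) <= K2 * vnorm (vsub y x))
    by apply (Rabs_coord2_le _ _ Hpqr).
  assert (0 <= K1 * vnorm (vsub y x)) by (apply Rmult_le_pos; lra).
  assert (0 <= K2 * vnorm (vsub y x)) by (apply Rmult_le_pos; lra).
  rewrite Rmult_plus_distr_r. split; lra.
Qed.

End Barycentric.

(** * The triangle and its truncated parallelograms *)

Lemma closed_set_and (C1 C2 : pt -> Prop) :
  Defs.closed_set C1 -> Defs.closed_set C2 -> Defs.closed_set (fun x => C1 x /\ C2 x).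
Proof.
  intros H1 H2 x Hx. split; [apply H1 | apply H2]; intros eps Heps;
    destruct (Hx eps Heps) as [y [[Hy1 Hy2] Hy]]; eauto.
Qed.

Lemma closed_set_le (f : pt -> R) K c : 0 <= K ->
  (forall x y, Rabs (f y - f x) <= K * vnorm (vsub y x)) -> Defs.closed_set (fun x => f x <= c).
Proof.
  intros HK Hf x Hx. destruct (Rle_lt_dec (f x) c) as [|Hlt]; auto. exfalso.
  set (eps := (f x - c) / (K + 1)).
  assert (Heps : 0 < eps) by (apply Rdiv_lt_0_compat; lra).
  destruct (Hx eps Heps) as [y [Hy Hxy]].
  pose proof (Hf x y) as Hlip. apply Rabs_le_between in Hlip.
  pose proof (vnorm_nonneg (vsub y x)).
  assert (K * vnorm (vsub y x) <= K * eps) by (apply Rmult_le_compat_l; lra).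
  assert (K * eps < f x - c) by (unfold eps; apply Rmult_lt_reg_r with (K + 1);
    [lra | field_simplify; nra]).
  lra.
Qed.

Lemma closed_set_ge (f : pt -> R) K c : 0 <= K ->
  (forall x y, Rabs (f y - f x) <= K * vnorm (vsub y x)) -> Defs.closed_set (fun x => c <= f x).
Proof.
  intros HK Hf x Hx. enough (- f x <= - c) by lra.
  apply (closed_set_le (fun z => - f z) K (- c) HK).
  - intros a b. replace (- f b - - f a) with (- (f b - f a)) by ring. rewrite Rabs_Ropp. auto.
  - intros eps Heps. destruct (Hx eps Heps) as [y [Hy Hxy]]. exists y. split; auto. lra.
Qed.

Definition trunc_parallelogram (p q r : pt) (e : R) (x : pt) : Prop :=
  (0 <= bary_q p q r x <= 1) /\ (0 <= bary_r p q r x <= 1) /\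
  bary_q p q r x + bary_r p q r x <= 1 + e.

Section TruncParallelogram.

Variables p q r : pt.
Hypothesis Hpqr : noncollinear p q r.

Lemma trunc_parallelogram_convex_body e : 0 <= e -> convex_body (trunc_parallelogram p q r e).
Proof.
  intros He. destruct (bary_lipschitz p q r Hpqr) as [K [HK HKx]].
  assert (Hq : forall x y, Rabs (bary_q p q r y - bary_q p q r x) <= K * vnorm (vsub y x))
    by apply HKx.
  assert (Hr : forall x y, Rabs (bary_r p q r y - bary_r p q r x) <= K * vnorm (vsub y x))
    by apply HKx.
  split; [|split; [|split]].
  - intros a b t Ha Hb Ht. unfold trunc_parallelogram in *.
    rewrite bary_q_segment, bary_r_segment by exact Hpqr. nra.
  - exists (vnorm p + vnorm (vsub q p) + vnorm (vsub r p)). intros x [Hxq [Hxr _]].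
    rewrite (point_of_bary_bary p q r Hpqr x). unfold point_of_bary.
    rewrite Rplus_assoc. eapply Rle_trans; [apply vnorm_triang|]. apply Rplus_le_compat_l.
    eapply Rle_trans; [apply vnorm_triang|]. rewrite !vnorm_scale, !Rabs_pos_eq by lra.
    pose proof (vnorm_nonneg (vsub q p)). pose proof (vnorm_nonneg (vsub r p)). nra.
  - assert (Hsum : forall x y,
      Rabs ((bary_q p q r y + bary_r p q r y) - (bary_q p q r x + bary_r p q r x))
        <= (K + K) * vnorm (vsub y x)).
    { intros x y.
      replace (bary_q p q r y + bary_r p q r y - (bary_q p q r x + bary_r p q r x))
        with ((bary_q p q r y - bary_q p q r x) + (bary_r p q r y - bary_r p q r x)) by ring.
      eapply Rle_trans; [apply Rabs_triang|]. pose proof (Hq x y). pose proof (Hr x y). lra. }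
    repeat apply closed_set_and;
      first [ apply (closed_set_ge _ K); assumption
            | apply (closed_set_le _ K); assumption
            | apply (closed_set_le (fun x => bary_q p q r x + bary_r p q r x) (K + K)); auto; lra ].
  - set (x0 := point_of_bary p q r (1/4) (1/4)).
    destruct (bary_point_of_bary p q r Hpqr (1/4) (1/4)) as [H1 H2]. fold x0 in H1, H2.
    exists x0, (1 / (8 * (K + 1))). split; [apply Rdiv_lt_0_compat; lra|].
    intros y Hy. pose proof (Hq x0 y) as Hyq. pose proof (Hr x0 y) as Hyr. rewrite H1, H2 in *.
    assert (K * vnorm (vsub y x0) <= 1 / 8).
    { pose proof (vnorm_nonneg (vsub y x0)).
      apply Rle_trans with ((K + 1) * (1 / (8 * (K + 1)))); [nra | right; field; lra]. }
    apply Rabs_le_between in Hyq. apply Rabs_le_between in Hyr. unfold trunc_parallelogram. lra.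
Qed.

Lemma triangle_hull_trunc_parallelogram e x : 0 <= e ->
  triangle_hull p q r x -> trunc_parallelogram p q r e x.
Proof. intros He Hx. apply triangle_hull_iff in Hx; auto. unfold trunc_parallelogram. lra. Qed.

Lemma triangle_hull_eq_trunc_parallelogram0 : triangle_hull p q r = trunc_parallelogram p q r 0.
Proof.
  apply functional_extensionality. intros x. apply propositional_extensionality.
  rewrite triangle_hull_iff by exact Hpqr. unfold trunc_parallelogram. lra.
Qed.

Lemma triangle_hull_convex_body : convex_body (triangle_hull p q r).
Proof.
  rewrite triangle_hull_eq_trunc_parallelogram0. apply trunc_parallelogram_convex_body. lra.
Qed.

Lemma triangle_hull_strict_trunc_parallelogram e : 0 < e <= 1 ->
  strict_subset (triangle_hull p q r) (trunc_parallelogram p q r e).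
Proof.
  intros He. split; [intros x; apply triangle_hull_trunc_parallelogram; lra|].
  exists (point_of_bary p q r ((1 + e) / 2) ((1 + e) / 2)).
  destruct (bary_point_of_bary p q r Hpqr ((1 + e) / 2) ((1 + e) / 2)) as [H1 H2].
  rewrite triangle_hull_iff, H1, H2 by exact Hpqr. unfold trunc_parallelogram. rewrite H1, H2. lra.
Qed.

End TruncParallelogram.

Lemma triangle_hull_rot p q r : triangle_hull p q r = triangle_hull q r p.
Proof.
  apply functional_extensionality. intros x. apply propositional_extensionality.
  split; intros [l1 [l2 [l3 [H1 [H2 [H3 [H4 ->]]]]]]].
  - exists l2, l3, l1. repeat split; try lra. pt_ring.
  - exists l3, l1, l2. repeat split; try lra. pt_ring.
Qed.

Lemma noncollinear_rot p q r : noncollinear p q r -> noncollinear q r p.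
Proof. unfold noncollinear, det2, vsub. simpl. intros H H'. apply H. lra. Qed.

Lemma triangle_hull_p p q r : triangle_hull p q r p.
Proof. exists 1, 0, 0. repeat split; try lra. pt_ring. Qed.

Lemma triangle_hull_q p q r : triangle_hull p q r q.
Proof. exists 0, 1, 0. repeat split; try lra. pt_ring. Qed.

Lemma triangle_hull_r p q r : triangle_hull p q r r.
Proof. exists 0, 0, 1. repeat split; try lra. pt_ring. Qed.

Lemma convex_triangle_hull_sub (C : pt -> Prop) p q r : convex C -> C p -> C q -> C r ->
  forall x, triangle_hull p q r x -> C x.
Proof.
  intros Hc Hp Hq Hr x [l1 [l2 [l3 [H1 [H2 [H3 [H4 ->]]]]]]].
  destruct (Req_dec (l2 + l3) 0) as [H0|H0].
  - replace (vadd (vscale l1 p) (vadd (vscale l2 q) (vscale l3 r))) with p; auto.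
    replace l1 with 1 by lra. replace l2 with 0 by lra. replace l3 with 0 by lra. pt_ring.
  - set (m := vadd q (vscale (l3 / (l2 + l3)) (vsub r q))).
    assert (Cm : C m).
    { apply Hc; auto. split; [apply Rdiv_le_0_compat; lra|].
      apply Rmult_le_reg_r with (l2 + l3); [lra|]. field_simplify; lra. }
    replace (vadd (vscale l1 p) (vadd (vscale l2 q) (vscale l3 r)))
      with (vadd p (vscale (l2 + l3) (vsub m p))).
    + apply Hc; auto. lra.
    + unfold m. replace l1 with (1 - l2 - l3) by lra. pt_field; exact H0.
Qed.

(** * Complete triangles *)

(* The interior of the difference body of the triangle with edge vectors A and B, in the
   coordinates of the basis (A, B). *)
Definition hexagon (A B w : pt) : Prop :=
  Rabs (coord1 A B w) < 1 /\ Rabs (coord2 A B w) < 1 /\ Rabs (coord1 A B w + coord2 A B w) < 1.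

Lemma hexagon_dilated_difference p q r w : noncollinear p q r -> hexagon (vsub q p) (vsub r p) w ->
  exists lam a b, 1 < lam /\ triangle_hull p q r a /\ triangle_hull p q r b /\
    vsub b a = vscale lam w.
Proof.
  intros Hpqr [H1 [H2 H12]].
  set (g1 := coord1 (vsub q p) (vsub r p) w) in *. set (g2 := coord2 (vsub q p) (vsub r p) w) in *.
  set (m := Rmax (Rabs g1) (Rmax (Rabs g2) (Rabs (g1 + g2)))).
  assert (Hm1 : m < 1) by (unfold m; repeat apply Rmax_lub_lt; auto).
  assert (Hm0 : 0 <= m) by (unfold m; eapply Rle_trans; [apply Rabs_pos | apply Rmax_l]).
  assert (Hparts : Rmax g1 0 + Rmax g2 0 <= m /\ Rmax (- g1) 0 + Rmax (- g2) 0 <= m).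
  { unfold m, Rmax, Rabs. repeat destruct Rle_dec; repeat destruct Rcase_abs; lra. }
  set (lam := 2 / (1 + m)).
  assert (Hlam1 : 1 < lam)
    by (unfold lam; apply Rmult_lt_reg_r with (1 + m); [lra | field_simplify; lra]).
  assert (Hlamm : lam * m < 1)
    by (unfold lam; apply Rmult_lt_reg_r with (1 + m); [lra | field_simplify; lra]).
  assert (Hin : forall a b, 0 <= a -> 0 <= b -> a + b <= m ->
                triangle_hull p q r (point_of_bary p q r (lam * a) (lam * b))).
  { intros a b Ha Hb Hab. apply triangle_hull_iff; auto.
    destruct (bary_point_of_bary p q r Hpqr (lam * a) (lam * b)) as [-> ->].
    assert (lam * (a + b) <= lam * m) by (apply Rmult_le_compat_l; lra). nra. }
  exists lam, (point_of_bary p q r (lam * Rmax (- g1) 0) (lam * Rmax (- g2) 0)),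
    (point_of_bary p q r (lam * Rmax g1 0) (lam * Rmax g2 0)).
  split; [exact Hlam1|]. split; [apply Hin; try apply Rmax_r; lra|].
  split; [apply Hin; try apply Rmax_r; lra|].
  assert (Hsplit : w = vadd (vscale (Rmax g1 0 - Rmax (- g1) 0) (vsub q p))
                            (vscale (Rmax g2 0 - Rmax (- g2) 0) (vsub r p))).
  { rewrite (coord_decomp (vsub q p) (vsub r p) Hpqr w) at 1. fold g1 g2.
    f_equal; f_equal; unfold Rmax; repeat destruct Rle_dec; lra. }
  rewrite Hsplit. unfold point_of_bary. pt_ring.
Qed.

Section TriangleDiameter.

Variables (L : pt -> Prop) (p q r : pt) (d : R).
Hypothesis HL : is_lattice L.
Hypothesis Hpqr : noncollinear p q r.
Hypothesis Hd : lattice_diam L (triangle_hull p q r) = Finite d.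
Hypothesis Hdpos : 0 < d.

Local Notation A := (vsub q p).
Local Notation B := (vsub r p).

Lemma diam_hexagon_free z : L z -> z <> origin -> ~ hexagon A B (vscale d z).
Proof.
  intros Lz Hz0 Hhex.
  destruct (hexagon_dilated_difference p q r _ Hpqr Hhex) as [lam [a [b [Hlam [Ta [Tb Hba]]]]]].
  destruct (lattice_primitive_multiple L HL z Lz Hz0) as [g [k [Hg [Hk ->]]]].
  apply IZR_le in Hk.
  assert (Hchord : lattice_chord L (triangle_hull p q r) (lam * d * IZR k)).
  { exists a, b. split; [exact Ta|]. split; [exact Tb|].
    apply (lattice_segment_length_intro L g); auto.
    - apply Rmult_lt_0_compat; [apply Rmult_lt_0_compat|]; lra.
    - rewrite Hba. pt_ring. }
  pose proof (Lub_Rbar_ub _ _ Hchord) as Hle.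
  change (Lub_Rbar _) with (lattice_diam L (triangle_hull p q r)) in Hle.
  rewrite Hd in Hle. simpl in Hle.
  assert (d < lam * d) by nra. nra.
Qed.

Hypothesis Hcomplete : lattice_complete L (triangle_hull p q r).

(* Completeness forbids enlarging the triangle beyond the edge qr without increasing the
   diameter, so lattice chords of the enlarged body push d z just beyond that edge. *)
Lemma complete_near_edge_vector e : 0 < e <= 1/2 -> exists z, L z /\
  Rabs (coord1 A B (vscale d z)) < 1 /\ Rabs (coord2 A B (vscale d z)) < 1 /\
  1 <= coord1 A B (vscale d z) + coord2 A B (vscale d z) <= 1 + e.
Proof.
  intros He. set (Q := trunc_parallelogram p q r e).
  assert (Hne : lattice_diam L Q <> lattice_diam L (triangle_hull p q r)).
  { apply Hcomplete.
    - apply trunc_parallelogram_convex_body; auto; lra.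
    - apply triangle_hull_strict_trunc_parallelogram; auto; lra. }
  assert (Hlong : exists t, lattice_chord L Q t /\ d < t).
  { apply NNPP. intros Hno. apply Hne. rewrite Hd. apply Rbar_le_antisym.
    - apply Lub_Rbar_le_ub. intros t Ht.
      destruct (Rle_lt_dec t d); auto. exfalso. eauto.
    - rewrite <- Hd. apply lattice_diam_mono.
      intros x. apply triangle_hull_trunc_parallelogram; auto; lra. }
  destruct Hlong as [t [[a [b [Qa [Qb Hs]]]] Hdt]].
  destruct (lattice_segment_length_dir L a b t Hs) as [v [Lv [Hv0 [Ht Hba]]]].
  set (lam := d / t).
  assert (Hlam : 0 < lam < 1).
  { unfold lam. split; [apply Rdiv_lt_0_compat; lra|].
    apply Rmult_lt_reg_r with t; [lra|]. field_simplify; lra. }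
  assert (Hdv : vscale d v = vscale lam (vsub b a)) by (rewrite Hba; unfold lam; pt_field; lra).
  assert (HX1 : coord1 A B (vscale d v) = lam * (bary_q p q r b - bary_q p q r a))
    by (rewrite Hdv, coord1_scale, coord1_vsub_bary; auto).
  assert (HX2 : coord2 A B (vscale d v) = lam * (bary_r p q r b - bary_r p q r a))
    by (rewrite Hdv, coord2_scale, coord2_vsub_bary; auto).
  unfold Q, trunc_parallelogram in Qa, Qb.
  assert (Hc1 : Rabs (coord1 A B (vscale d v)) < 1) by (rewrite HX1; apply Rabs_def1; nra).
  assert (Hc2 : Rabs (coord2 A B (vscale d v)) < 1) by (rewrite HX2; apply Rabs_def1; nra).
  assert (Hc12 : Rabs (coord1 A B (vscale d v) + coord2 A B (vscale d v)) <= 1 + e)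
    by (rewrite HX1, HX2; apply Rabs_le; nra).
  assert (Hge : 1 <= Rabs (coord1 A B (vscale d v) + coord2 A B (vscale d v))).
  { destruct (Rlt_le_dec (Rabs (coord1 A B (vscale d v) + coord2 A B (vscale d v))) 1); auto.
    exfalso. apply (diam_hexagon_free v Lv Hv0). repeat split; auto. }
  clear HX1 HX2. apply Rabs_le_between in Hc12.
  destruct (Rle_lt_dec 0 (coord1 A B (vscale d v) + coord2 A B (vscale d v))).
  - exists v. rewrite Rabs_pos_eq in Hge by lra. repeat split; auto; lra.
  - exists (vscale (-1) v). split; [apply lattice_opp; auto|].
    replace (vscale d (vscale (-1) v)) with (vscale (-1) (vscale d v)) by pt_ring.
    rewrite coord1_scale, coord2_scale, !Rabs_mult, Rabs_m1, !Rmult_1_l by auto.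
    rewrite Rabs_left in Hge by lra. repeat split; auto; lra.
Qed.

Lemma complete_edge_vector : exists u s, L u /\ 0 < s < 1 /\
  vscale d u = vadd (vscale (1 - s) A) (vscale s B).
Proof.
  destruct (complete_near_edge_vector (1/2)) as [z0 [Lz0 [H1 [H2 H3]]]]; [lra|].
  set (c1 := coord1 A B (vscale d z0)) in *. set (c2 := coord2 A B (vscale d z0)) in *.
  (* every near-edge vector coincides with z0, otherwise their difference lies in the hexagon *)
  assert (Hall : forall e, 0 < e <= 1/2 -> c1 + c2 <= 1 + e).
  { intros e He. destruct (complete_near_edge_vector e He) as [z [Lz [K1 [K2 K3]]]].
    destruct (classic (vsub z0 z = origin)) as [Heq|Hneq].
    - apply vsub_eq_origin in Heq. subst z. fold c1 c2 in K3. lra.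
    - exfalso. apply (diam_hexagon_free (vsub z0 z)); [apply lattice_sub; auto | exact Hneq |].
      replace (vscale d (vsub z0 z)) with (vsub (vscale d z0) (vscale d z)) by pt_ring.
      unfold hexagon. rewrite coord1_sub, coord2_sub by auto. fold c1 c2.
      apply Rabs_def2 in H1. apply Rabs_def2 in H2.
      apply Rabs_def2 in K1. apply Rabs_def2 in K2.
      repeat split; apply Rabs_def1; lra. }
  assert (Hsum : c1 + c2 = 1).
  { destruct (Rle_lt_dec (c1 + c2) 1) as [|Hgt]; [lra|]. exfalso.
    assert (He : 0 < Rmin (1/2) ((c1 + c2 - 1) / 2) <= 1/2)
      by (split; [apply Rmin_glb_lt; lra | apply Rmin_l]).
    pose proof (Hall _ He). pose proof (Rmin_r (1/2) ((c1 + c2 - 1) / 2)). lra. }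
  exists z0, c2. apply Rabs_def2 in H1. apply Rabs_def2 in H2.
  split; auto. split; [lra|].
  rewrite (coord_decomp A B Hpqr (vscale d z0)) at 1. fold c1 c2.
  replace c1 with (1 - c2) by lra. reflexivity.
Qed.

End TriangleDiameter.

(** * Lattice width and reducedness *)

Lemma dot_comm u v : dot u v = dot v u.
Proof. unfold dot; ring. Qed.

Lemma dot_vsub_bary p q r y x : noncollinear p q r ->
  dot y (vsub x p) = bary_q p q r x * dot y (vsub q p) + bary_r p q r x * dot y (vsub r p).
Proof.
  intros Hpqr. unfold bary_q, bary_r.
  rewrite (coord_decomp (vsub q p) (vsub r p) Hpqr (vsub x p)) at 1. apply dot_comb.
Qed.

Lemma dir_width_le C y v a b : dir_width C y = Finite v -> C a -> C b -> dot y (vsub a b) <= v.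
Proof.
  intros Hv Ca Cb. assert (H : Rbar_le (dot y (vsub a b)) (dir_width C y))
    by (apply Lub_Rbar_ub; exists a, b; auto).
  rewrite Hv in H. exact H.
Qed.

Lemma dir_width_triangle p q r y : noncollinear p q r ->
  0 <= dot y (vsub q p) -> 0 <= dot y (vsub r p) ->
  dir_width (triangle_hull p q r) y = Finite (Rmax (dot y (vsub q p)) (dot y (vsub r p))).
Proof.
  intros Hpqr HyA HyB.
  assert (Hrange : forall x, triangle_hull p q r x ->
            0 <= dot y (vsub x p) <= Rmax (dot y (vsub q p)) (dot y (vsub r p))).
  { intros x Hx. apply triangle_hull_iff in Hx; auto. rewrite (dot_vsub_bary p q r) by auto.
    pose proof (Rmax_l (dot y (vsub q p)) (dot y (vsub r p))).
    pose proof (Rmax_r (dot y (vsub q p)) (dot y (vsub r p))). nra. }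
  apply Lub_Rbar_max.
  - unfold Rmax. destruct Rle_dec.
    + exists r, p. auto using triangle_hull_r, triangle_hull_p.
    + exists q, p. auto using triangle_hull_q, triangle_hull_p.
  - intros w [a [b [Ta [Tb ->]]]].
    replace (vsub a b) with (vsub (vsub a p) (vsub b p)) by pt_ring.
    replace (dot y (vsub (vsub a p) (vsub b p))) with (dot y (vsub a p) - dot y (vsub b p))
      by (unfold dot, vsub; simpl; ring).
    pose proof (Hrange a Ta). pose proof (Hrange b Tb). lra.
Qed.

Lemma triangle_lattice_width L p q r y0 w :
  dual L y0 -> y0 <> origin -> dir_width (triangle_hull p q r) y0 = Finite w ->
  (forall y, dual L y -> y <> origin ->
     w <= Rabs (dot y (vsub q p)) \/ w <= Rabs (dot y (vsub r p)) \/
     w <= Rabs (dot y (vsub r q))) ->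
  lattice_width L (triangle_hull p q r) = Finite w.
Proof.
  intros Hy0 Hy00 Hw Hmin. apply Glb_Rbar_min; [exists y0; auto|].
  intros v [y [Hy [Hy0' Hv]]].
  assert (Hedge : forall a b, triangle_hull p q r a -> triangle_hull p q r b ->
                   Rabs (dot y (vsub b a)) <= v).
  { intros a b Ta Tb. apply Rabs_le.
    pose proof (dir_width_le _ _ _ _ _ Hv Ta Tb). pose proof (dir_width_le _ _ _ _ _ Hv Tb Ta).
    replace (dot y (vsub a b)) with (- dot y (vsub b a)) in * by (unfold dot, vsub; simpl; ring).
    lra. }
  pose proof (Hedge p q (triangle_hull_p _ _ _) (triangle_hull_q _ _ _)).
  pose proof (Hedge p r (triangle_hull_p _ _ _) (triangle_hull_r _ _ _)).
  pose proof (Hedge q r (triangle_hull_q _ _ _) (triangle_hull_r _ _ _)).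
  destruct (Hmin y Hy Hy0') as [Hw1|[Hw1|Hw1]]; lra.
Qed.

(* y realises the lattice width of the triangle, with p as its unique minimiser on it. *)
Definition vertex_width_witness (L : pt -> Prop) (p q r : pt) : Prop :=
  exists w y, lattice_width L (triangle_hull p q r) = Finite w /\ dual L y /\
    0 < dot y (vsub q p) <= w /\ 0 < dot y (vsub r p) <= w.

Lemma closed_set_avoids (C : pt -> Prop) p : Defs.closed_set C -> ~ C p ->
  exists eps, 0 < eps /\ forall z, C z -> eps <= vnorm (vsub z p).
Proof.
  intros Hcl Hp. apply NNPP. intros Hno. apply Hp, Hcl. intros eps Heps.
  apply NNPP. intros Hfar. apply Hno. exists eps. split; [lra|]. intros z Cz.
  destruct (Rle_lt_dec eps (vnorm (vsub z p))) as [|Hlt]; auto. exfalso. eauto.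
Qed.

Lemma vnorm_vsub_le_bary p q r z : noncollinear p q r ->
  0 <= bary_q p q r z -> 0 <= bary_r p q r z ->
  vnorm (vsub z p) <= (bary_q p q r z + bary_r p q r z) * (vnorm (vsub q p) + vnorm (vsub r p)).
Proof.
  intros Hpqr Ha Hb. rewrite (point_of_bary_bary p q r Hpqr z) at 1. unfold point_of_bary.
  replace (vsub (vadd p (vadd (vscale (bary_q p q r z) (vsub q p))
                              (vscale (bary_r p q r z) (vsub r p)))) p)
    with (vadd (vscale (bary_q p q r z) (vsub q p)) (vscale (bary_r p q r z) (vsub r p)))
    by pt_ring.
  eapply Rle_trans; [apply vnorm_triang|].
  rewrite !vnorm_scale, !Rabs_pos_eq by lra.
  pose proof (vnorm_nonneg (vsub q p)). pose proof (vnorm_nonneg (vsub r p)). nra.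
Qed.

Lemma dir_width_slab (C : pt -> Prop) y p lo hi : (exists x, C x) ->
  (forall z, C z -> lo <= dot y (vsub z p) <= hi) ->
  exists l, dir_width C y = Finite l /\ l <= hi - lo.
Proof.
  intros [x0 Cx0] Hslab.
  destruct (Lub_Rbar_finite (fun v => exists a b, C a /\ C b /\ v = dot y (vsub a b)) 0 (hi - lo))
    as [l [Hl [_ Hle]]]; [| | exists l; auto].
  - exists x0, x0. repeat split; auto. unfold dot, vsub; simpl; ring.
  - intros v [a [b [Ca [Cb ->]]]].
    replace (dot y (vsub a b)) with (dot y (vsub a p) - dot y (vsub b p))
      by (unfold dot, vsub; simpl; ring).
    pose proof (Hslab a Ca). pose proof (Hslab b Cb). lra.
Qed.

(* A convex body inside the triangle that misses p stays a fixed positive distance above p in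
   the witnessing direction, so its width there drops below the lattice width of the triangle. *)
Lemma reduced_at_vertex L p q r C : noncollinear p q r -> vertex_width_witness L p q r ->
  convex_body C -> (forall x, C x -> triangle_hull p q r x) -> ~ C p ->
  lattice_width L C <> lattice_width L (triangle_hull p q r).
Proof.
  intros Hpqr [w [y [Hw [Hy [HA HB]]]]] [_ [_ [Hcl [x0 [e0 [He0 Hball]]]]]] Hsub Hp.
  assert (Cx0 : C x0) by (apply Hball; replace (vsub x0 x0) with origin by pt_ring;
    rewrite vnorm_origin; lra).
  destruct (closed_set_avoids C p Hcl Hp) as [eps [Heps Hfar]].
  set (K := vnorm (vsub q p) + vnorm (vsub r p) + 1).
  assert (HK : 0 < K) by (unfold K; pose proof (vnorm_nonneg (vsub q p));
    pose proof (vnorm_nonneg (vsub r p)); lra).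
  set (mu := Rmin (dot y (vsub q p)) (dot y (vsub r p))).
  assert (Hmu : 0 < mu) by (apply Rmin_glb_lt; lra).
  pose proof (Rmin_l (dot y (vsub q p)) (dot y (vsub r p))).
  pose proof (Rmin_r (dot y (vsub q p)) (dot y (vsub r p))).
  assert (Hslab : forall z, C z -> mu * (eps / K) <= dot y (vsub z p) <= w).
  { intros z Cz. pose proof (Hsub z Cz) as Tz. apply triangle_hull_iff in Tz; auto.
    pose proof (vnorm_vsub_le_bary p q r z Hpqr (proj1 Tz) (proj1 (proj2 Tz))).
    pose proof (Hfar z Cz). rewrite (dot_vsub_bary p q r) by auto.
    set (a := bary_q p q r z) in *. set (b := bary_r p q r z) in *.
    assert (Hab : eps / K <= a + b).
    { apply Rmult_le_reg_r with K; auto. field_simplify; unfold K in *; nra. }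
    split; [|nra]. apply Rle_trans with (mu * (a + b)); [apply Rmult_le_compat_l; lra|].
    unfold mu in *. nra. }
  destruct (dir_width_slab C y p _ _ (ex_intro _ x0 Cx0) Hslab) as [l [Hl Hlw]].
  assert (Hy0 : y <> origin) by (intros ->; unfold dot, origin in HA; simpl in HA; lra).
  assert (Hle : Rbar_le (lattice_width L C) l) by (apply Glb_Rbar_lb; exists y; auto).
  assert (0 < mu * (eps / K)) by (apply Rmult_lt_0_compat; [|apply Rdiv_lt_0_compat]; lra).
  rewrite Hw. intros Heq. rewrite Heq in Hle. simpl in Hle. lra.
Qed.

Lemma triangle_reduced_of_witnesses L p q r : noncollinear p q r ->
  vertex_width_witness L p q r -> vertex_width_witness L q r p -> vertex_width_witness L r p q ->
  lattice_reduced L (triangle_hull p q r).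
Proof.
  intros Hpqr Wp Wq Wr C HC [Hsub [x [Tx Cx]]].
  assert (Hqrp := noncollinear_rot p q r Hpqr).
  assert (Hrpq := noncollinear_rot q r p Hqrp).
  destruct (classic (C p)) as [Cp|Cp]; [destruct (classic (C q)) as [Cq|Cq];
    [destruct (classic (C r)) as [Cr|Cr]|]|].
  - exfalso. apply Cx. apply (convex_triangle_hull_sub C p q r); auto. apply HC.
  - rewrite triangle_hull_rot, triangle_hull_rot in *. apply reduced_at_vertex; auto.
  - rewrite triangle_hull_rot in *. apply reduced_at_vertex; auto.
  - apply reduced_at_vertex; auto.
Qed.

(** * Edge vectors of a complete triangle *)

Lemma dot_eq_origin_basis A B y : det2 A B <> 0 -> dot y A = 0 -> dot y B = 0 -> y = origin.
Proof.
  intros HAB HA HB.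
  assert (Hyy : dot y y = 0).
  { rewrite (coord_decomp A B HAB y) at 2. rewrite dot_comb, HA, HB. ring. }
  destruct y as [y1 y2]. unfold dot in Hyy; simpl in Hyy.
  apply pt_eq; simpl; nra.
Qed.

Lemma nonzero_int_pair_bound (m n : Z) s : 0 < s < 1 -> (m <> 0 \/ n <> 0)%Z ->
  1 <= Rabs ((1 - s) * IZR m - s * IZR n) \/ 1 <= Rabs (IZR m + (1 - s) * IZR n) \/
  1 <= Rabs (s * IZR m + IZR n).
Proof.
  intros Hs Hmn.
  assert (Hge1 : forall x, 1 <= x \/ x <= -1 -> 1 <= Rabs x)
    by (intros x; pose proof (RRle_abs x); pose proof (Rabs_maj2 x); lra).
  destruct (Z.eq_dec m 0) as [-> | Hm]; [destruct Hmn as [|Hn]; [lia|] |].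
  - right; right. apply Hge1. destruct (IZR_neq0_cases n Hn); simpl; lra.
  - destruct (Z.eq_dec n 0) as [-> | Hn].
    + right; left. apply Hge1. destruct (IZR_neq0_cases m Hm); simpl; lra.
    + destruct (IZR_neq0_cases m Hm), (IZR_neq0_cases n Hn).
      * right; left. apply Hge1. nra.
      * left. apply Hge1. nra.
      * left. apply Hge1. nra.
      * right; left. apply Hge1. nra.
Qed.

Lemma complete_edge_vectors L p q r : is_lattice L -> noncollinear p q r ->
  lattice_complete L (triangle_hull p q r) ->
  exists d s up uq, 0 < d /\ lattice_diam L (triangle_hull p q r) = Finite d /\ 0 < s < 1 /\
    L up /\ L uq /\
    vscale d up = vadd (vscale (1 - s) (vsub q p)) (vscale s (vsub r p)) /\
    vscale d uq = vadd (vscale (-1) (vsub q p)) (vscale (1 - s) (vsub r p)).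
Proof.
  intros HL Hpqr Hc.
  assert (Hqrp := noncollinear_rot p q r Hpqr).
  assert (Hrpq := noncollinear_rot q r p Hqrp).
  pose proof (triangle_hull_convex_body p q r Hpqr) as [_ [HTb [_ HTi]]].
  destruct (lattice_diam_finite L (triangle_hull p q r) HL HTb HTi) as [d [Hdpos Hd]].
  destruct (complete_edge_vector L p q r d HL Hpqr Hd Hdpos Hc) as [up [s [Lup [Hs Hup]]]].
  pose proof Hd as Hd'. pose proof Hc as Hc'. rewrite triangle_hull_rot in Hd', Hc'.
  destruct (complete_edge_vector L q r p d HL Hqrp Hd' Hdpos Hc') as [uq [t [Luq [Ht Huq]]]].
  rewrite triangle_hull_rot in Hd', Hc'.
  destruct (complete_edge_vector L r p q d HL Hrpq Hd' Hdpos Hc') as [ur [w [Lur [Hw Hur]]]].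
  (* the three edge vectors sum to a lattice vector whose multiple d z has coordinates
     (w - s, s - t), which lies in the hexagon unless w = s = t *)
  set (z := vadd up (vadd uq ur)).
  assert (Hz : vscale d z = vadd (vscale (w - s) (vsub q p)) (vscale (s - t) (vsub r p))).
  { transitivity (vadd (vscale d up) (vadd (vscale d uq) (vscale d ur))); [unfold z; pt_ring|].
    rewrite Hup, Huq, Hur. pt_ring. }
  assert (Hc1 := coord1_comb _ _ Hpqr (w - s) (s - t)).
  assert (Hc2 := coord2_comb _ _ Hpqr (w - s) (s - t)).
  rewrite <- Hz in Hc1, Hc2.
  destruct (classic (z = origin)) as [Hz0|Hz0].
  - assert (Horigin : vscale d z = vadd (vscale 0 (vsub q p)) (vscale 0 (vsub r p)))
      by (rewrite Hz0; pt_ring).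
    rewrite Horigin, coord1_comb in Hc1 by exact Hpqr.
    rewrite Horigin, coord2_comb in Hc2 by exact Hpqr.
    assert (t = s) by lra. subst t.
    exists d, s, up, uq. do 6 (split; [auto|]). rewrite Huq. pt_ring.
  - exfalso. apply (diam_hexagon_free L p q r d HL Hpqr Hd Hdpos z); auto.
    + unfold z. repeat apply lattice_add; auto.
    + unfold hexagon. rewrite Hc1, Hc2. repeat split; apply Rabs_def1; lra.
Qed.

Section EdgeVectors.

Variables (L : pt -> Prop) (p q r : pt) (d s : R) (up uq : pt).
Hypothesis HL : is_lattice L.
Hypothesis Hpqr : noncollinear p q r.
Hypothesis Hd : lattice_diam L (triangle_hull p q r) = Finite d.
Hypothesis Hdpos : 0 < d.
Hypothesis Hs : 0 < s < 1.
Hypothesis Lup : L up.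
Hypothesis Luq : L uq.
Hypothesis Hup : vscale d up = vadd (vscale (1 - s) (vsub q p)) (vscale s (vsub r p)).
Hypothesis Huq : vscale d uq = vadd (vscale (-1) (vsub q p)) (vscale (1 - s) (vsub r p)).

Local Notation A := (vsub q p).
Local Notation B := (vsub r p).
Local Notation W := (d / ((1 - s) * (1 - s) + s)).

Lemma edge_vectors_express :
  A = vscale W (vadd (vscale (1 - s) up) (vscale (- s) uq)) /\
  B = vscale W (vadd up (vscale (1 - s) uq)).
Proof.
  assert (HD : 0 < (1 - s) * (1 - s) + s) by nra.
  split.
  - transitivity (vscale (/ ((1 - s) * (1 - s) + s))
                     (vadd (vscale (1 - s) (vscale d up)) (vscale (- s) (vscale d uq)))).
    + rewrite Hup, Huq. pt_field; lra.
    + pt_field; lra.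
  - transitivity (vscale (/ ((1 - s) * (1 - s) + s))
                     (vadd (vscale d up) (vscale (1 - s) (vscale d uq)))).
    + rewrite Hup, Huq. pt_field; lra.
    + pt_field; lra.
Qed.

Lemma edge_vectors_det : det2 up uq <> 0.
Proof.
  intros H0. apply Hpqr. unfold noncollinear.
  destruct edge_vectors_express as [-> ->].
  replace (det2 (vscale W (vadd (vscale (1 - s) up) (vscale (- s) uq)))
                (vscale W (vadd up (vscale (1 - s) uq))))
    with (W * W * ((1 - s) * (1 - s) + s) * det2 up uq)
    by (unfold det2, vscale, vadd; simpl; ring).
  rewrite H0. ring.
Qed.

(* The residue of x modulo the parallelogram spanned by up and uq is mapped by d into the
   hexagon, hence vanishes. *)
Lemma edge_vectors_span x : L x -> exists k l : Z, x = vadd (vscale (IZR k) up) (vscale (IZR l) uq).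
Proof.
  intros Lx. pose proof edge_vectors_det as Hdet.
  set (k := Zfloor (coord1 up uq x)). set (l := Zfloor (coord2 up uq x)).
  pose proof (Zfloor_bound (coord1 up uq x)) as Hk.
  pose proof (Zfloor_bound (coord2 up uq x)) as Hl.
  fold k in Hk. fold l in Hl.
  set (a := coord1 up uq x - IZR k). set (b := coord2 up uq x - IZR l).
  assert (Ha : 0 <= a < 1) by (unfold a; lra).
  assert (Hb : 0 <= b < 1) by (unfold b; lra).
  set (x' := vsub x (vadd (vscale (IZR k) up) (vscale (IZR l) uq))).
  assert (Lx' : L x').
  { apply lattice_sub, lattice_add; auto; apply lattice_zscale; auto. }
  assert (Hx' : x' = vadd (vscale a up) (vscale b uq)).
  { unfold x', a, b. rewrite (coord_decomp up uq Hdet x) at 1. pt_ring. }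
  exists k, l. apply vsub_eq_origin. fold x'. apply NNPP. intros Hx0.
  apply (diam_hexagon_free L p q r d HL Hpqr Hd Hdpos x' Lx' Hx0).
  assert (Hdx : vscale d x' = vadd (vscale (a * (1 - s) - b) A) (vscale (a * s + b * (1 - s)) B)).
  { transitivity (vadd (vscale a (vscale d up)) (vscale b (vscale d uq))).
    - rewrite Hx'. pt_ring.
    - rewrite Hup, Huq. pt_ring. }
  unfold hexagon. rewrite Hdx, coord1_comb, coord2_comb by exact Hpqr.
  clearbody a b. repeat split; apply Rabs_def1; nra.
Qed.

Lemma edge_vectors_dual : exists y, dual L y /\ dot y up = 1 /\ dot y uq = 0.
Proof.
  pose proof edge_vectors_det as Hdet.
  set (y := vscale (/ det2 up uq) (snd uq, - fst uq)).
  assert (Hyp : dot y up = 1) by (unfold y, dot, vscale, det2 in *; simpl; field; auto).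
  assert (Hyq : dot y uq = 0) by (unfold y, dot, vscale, det2 in *; simpl; field; auto).
  exists y. split; auto. intros x Lx.
  destruct (edge_vectors_span x Lx) as [k [l ->]]. exists k.
  rewrite dot_comm, dot_comb, Hyp, Hyq. ring.
Qed.

Lemma edge_vectors_dot y :
  dot y A = W * ((1 - s) * dot y up - s * dot y uq) /\
  dot y B = W * (dot y up + (1 - s) * dot y uq) /\
  dot y (vsub r q) = W * (s * dot y up + dot y uq).
Proof.
  destruct edge_vectors_express as [EA EB].
  replace (vsub r q) with (vsub B A) by pt_ring.
  rewrite EA, EB. unfold dot, vscale, vadd, vsub; simpl. repeat split; ring.
Qed.

Lemma edge_vectors_lattice_width : lattice_width L (triangle_hull p q r) = Finite W.
Proof.
  assert (HW : 0 < W) by (apply Rdiv_lt_0_compat; nra).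
  pose proof edge_vectors_dot as Hdot.
  destruct edge_vectors_dual as [y0 [Hy0 [Hy0p Hy0q]]].
  assert (HA0 : dot y0 A = (1 - s) * W) by (rewrite (proj1 (Hdot y0)), Hy0p, Hy0q; ring).
  assert (HB0 : dot y0 B = W) by (rewrite (proj1 (proj2 (Hdot y0))), Hy0p, Hy0q; ring).
  apply (triangle_lattice_width L p q r y0).
  - exact Hy0.
  - intros ->. unfold dot, origin in Hy0p. simpl in Hy0p. lra.
  - rewrite dir_width_triangle, HA0, HB0, Rmax_right; auto; nra.
  - intros y Hy Hy0'.
    destruct (Hy up Lup) as [m Hm]. destruct (Hy uq Luq) as [n Hn].
    rewrite dot_comm in Hm, Hn. destruct (Hdot y) as [HA [HB HC]]. rewrite Hm, Hn in HA, HB, HC.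
    assert (Hmn : (m <> 0 \/ n <> 0)%Z).
    { destruct (Z.eq_dec m 0) as [-> | ]; [| auto]. destruct (Z.eq_dec n 0) as [-> | ]; [| auto].
      exfalso. apply Hy0'. apply (dot_eq_origin_basis A B y Hpqr).
      - rewrite HA. simpl. ring.
      - rewrite HB. simpl. ring. }
    rewrite HA, HB, HC, !Rabs_mult, (Rabs_pos_eq W) by lra.
    destruct (nonzero_int_pair_bound m n s Hs Hmn) as [H|[H|H]];
      [left | right; left | right; right]; nra.
Qed.

Lemma edge_vectors_witness : vertex_width_witness L p q r.
Proof.
  assert (HW : 0 < W) by (apply Rdiv_lt_0_compat; nra).
  destruct edge_vectors_dual as [y [Hy [Hyp Hyq]]].
  destruct (edge_vectors_dot y) as [HA [HB _]].
  exists W, y. split; [apply edge_vectors_lattice_width|]. split; [exact Hy|].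
  rewrite HA, HB, Hyp, Hyq. split; split; nra.
Qed.

End EdgeVectors.

Lemma complete_triangle_reduced L p q r : is_lattice L -> noncollinear p q r ->
  lattice_complete L (triangle_hull p q r) -> lattice_reduced L (triangle_hull p q r).
Proof.
  intros HL Hpqr Hc.
  assert (Hwit : forall a b c, noncollinear a b c -> lattice_complete L (triangle_hull a b c) ->
                 vertex_width_witness L a b c).
  { intros a b c Habc Hcabc.
    destruct (complete_edge_vectors L a b c HL Habc Hcabc)
      as [d [s [up [uq [Hdpos [Hd [Hs [Lup [Luq [Hup Huq]]]]]]]]]].
    apply (edge_vectors_witness L a b c d s up uq); auto. }
  assert (Hqrp := noncollinear_rot p q r Hpqr).
  assert (Hrpq := noncollinear_rot q r p Hqrp).
  pose proof Hc as Hc'. rewrite triangle_hull_rot in Hc'.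
  pose proof Hc' as Hc''. rewrite triangle_hull_rot in Hc''.
  apply triangle_reduced_of_witnesses; auto.
Qed.

(** * The standard triangle *)

Definition Z2 (x : pt) : Prop := exists m n : Z, x = (IZR m, IZR n).

Lemma Z2_lattice : is_lattice Z2.
Proof.
  split; [|split; [|split]].
  - exists 0%Z, 0%Z. reflexivity.
  - intros x y [m1 [n1 ->]] [m2 [n2 ->]]. exists (m1 - m2)%Z, (n1 - n2)%Z.
    unfold vsub; simpl. rewrite !minus_IZR. reflexivity.
  - intros x [m1 [n1 ->]]. exists (1/2). split; [lra|].
    intros y [m2 [n2 ->]] Hn.
    pose proof (Rabs_fst_le_vnorm (vsub (IZR m2, IZR n2) (IZR m1, IZR n1))).
    pose proof (Rabs_snd_le_vnorm (vsub (IZR m2, IZR n2) (IZR m1, IZR n1))).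
    unfold vsub in *; simpl in *. rewrite <- !minus_IZR in *.
    assert (E1 : (m2 - m1)%Z = 0%Z) by (apply IZR_Rabs_lt1; lra).
    assert (E2 : (n2 - n1)%Z = 0%Z) by (apply IZR_Rabs_lt1; lra).
    replace m2 with m1 by lia. replace n2 with n1 by lia. reflexivity.
  - exists (1, 0), (0, 1). split; [exists 1%Z, 0%Z; reflexivity|].
    split; [exists 0%Z, 1%Z; reflexivity|]. unfold det2; simpl. lra.
Qed.

Lemma Z2_dual_int m n : dual Z2 (IZR m, IZR n).
Proof.
  intros x [a [b ->]]. exists (a * m + b * n)%Z. unfold dot; simpl.
  rewrite plus_IZR, !mult_IZR. ring.
Qed.

Lemma Z2_dual y : dual Z2 y -> exists m n : Z, y = (IZR m, IZR n).
Proof.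
  intros Hy. destruct (Hy (1, 0)) as [m Hm]; [exists 1%Z, 0%Z; reflexivity|].
  destruct (Hy (0, 1)) as [n Hn]; [exists 0%Z, 1%Z; reflexivity|].
  exists m, n. unfold dot in *; simpl in *. apply pt_eq; simpl; lra.
Qed.

Lemma std_noncollinear : noncollinear (0, 0) (1, 0) (0, 1).
Proof. unfold noncollinear, det2, vsub; simpl. lra. Qed.

Lemma std_bary x : bary_q (0, 0) (1, 0) (0, 1) x = fst x /\ bary_r (0, 0) (1, 0) (0, 1) x = snd x.
Proof. unfold bary_q, bary_r, coord1, coord2, det2, vsub; simpl. split; field. Qed.

Lemma std_lattice_width : lattice_width Z2 (triangle_hull (0, 0) (1, 0) (0, 1)) = Finite 1.
Proof.
  apply (triangle_lattice_width Z2 _ _ _ (IZR 1, IZR 1)).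
  - apply Z2_dual_int.
  - intros H. injection H. lra.
  - rewrite dir_width_triangle by (apply std_noncollinear || (unfold dot, vsub; simpl; lra)).
    f_equal. unfold dot, vsub; simpl. rewrite Rmax_left; lra.
  - intros y Hy Hy0. destruct (Z2_dual y Hy) as [m [n ->]]. unfold dot, vsub; simpl.
    replace (IZR m * (1 - 0) + IZR n * (0 - 0)) with (IZR m) by ring.
    replace (IZR m * (0 - 0) + IZR n * (1 - 0)) with (IZR n) by ring.
    destruct (Z.eq_dec m 0) as [-> | Hm]; [destruct (Z.eq_dec n 0) as [-> | Hn] |].
    + contradiction.
    + right; left. apply IZR_Rabs_ge1; auto.
    + left. apply IZR_Rabs_ge1; auto.
Qed.

Lemma std_triangle_reduced : lattice_reduced Z2 (triangle_hull (0, 0) (1, 0) (0, 1)).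
Proof.
  pose proof std_lattice_width as Hw.
  apply triangle_reduced_of_witnesses; [apply std_noncollinear | | |].
  - exists 1, (IZR 1, IZR 1). split; [exact Hw|]. split; [apply Z2_dual_int|].
    unfold dot, vsub; simpl. lra.
  - exists 1, (IZR (-1), IZR 0). rewrite <- triangle_hull_rot. split; [exact Hw|].
    split; [apply Z2_dual_int|]. unfold dot, vsub; simpl. lra.
  - exists 1, (IZR 0, IZR (-1)). rewrite <- triangle_hull_rot, <- triangle_hull_rot.
    split; [exact Hw|]. split; [apply Z2_dual_int|]. unfold dot, vsub; simpl. lra.
Qed.

Lemma Z2_primitive_e1 : primitive_vector Z2 (1, 0).
Proof.
  split; [exists 1%Z, 0%Z; reflexivity|]. split; [intros H; injection H; lra|].
  intros x [a [b ->]] [rho Hrho]. exists a. injection Hrho. intros Hb Ha.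
  apply pt_eq; simpl; lra.
Qed.

Lemma std_lattice_diam (C : pt -> Prop) :
  (forall x, triangle_hull (0, 0) (1, 0) (0, 1) x -> C x) ->
  (forall x, C x -> trunc_parallelogram (0, 0) (1, 0) (0, 1) 1 x) ->
  lattice_diam Z2 C = Finite 1.
Proof.
  intros HT HS. apply Lub_Rbar_max.
  - exists (0, 0), (1, 0). split; [apply HT, triangle_hull_p|]. split; [apply HT, triangle_hull_q|].
    apply (lattice_segment_length_intro Z2 (1, 0)); [exact Z2_primitive_e1 | lra | pt_ring].
  - intros t [a [b [Ca [Cb Hs]]]].
    pose proof (HS a Ca) as Sa. pose proof (HS b Cb) as Sb. unfold trunc_parallelogram in Sa, Sb.
    rewrite (proj1 (std_bary a)), (proj2 (std_bary a)) in Sa.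
    rewrite (proj1 (std_bary b)), (proj2 (std_bary b)) in Sb.
    destruct (lattice_segment_length_dir Z2 a b t Hs) as [v [[m [n ->]] [Hv0 [Ht Hba]]]].
    injection Hba. unfold vsub, vscale. simpl. intros E2 E1.
    assert (Hm : Rabs (t * IZR m) <= 1) by (rewrite <- E1; apply Rabs_le; lra).
    assert (Hn : Rabs (t * IZR n) <= 1) by (rewrite <- E2; apply Rabs_le; lra).
    rewrite Rabs_mult, Rabs_pos_eq in Hm, Hn by lra.
    destruct (Z.eq_dec m 0) as [-> | Hm0]; [destruct (Z.eq_dec n 0) as [-> | Hn0] |].
    + exfalso. apply Hv0. reflexivity.
    + pose proof (IZR_Rabs_ge1 n Hn0). nra.
    + pose proof (IZR_Rabs_ge1 m Hm0). nra.
Qed.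

(* The unit square is a proper enlargement of the triangle with the same lattice diameter. *)
Lemma std_triangle_not_complete : ~ lattice_complete Z2 (triangle_hull (0, 0) (1, 0) (0, 1)).
Proof.
  pose proof std_noncollinear as Hnc.
  intros Hc. apply (Hc (trunc_parallelogram (0, 0) (1, 0) (0, 1) 1)).
  - apply trunc_parallelogram_convex_body; [exact Hnc | lra].
  - apply triangle_hull_strict_trunc_parallelogram; [exact Hnc | lra].
  - rewrite !std_lattice_diam; auto; intros x Hx;
      apply triangle_hull_trunc_parallelogram; auto; lra.
Qed.

Theorem theorem1p4 :
  (forall (L : pt -> Prop) (p q r : pt),
      is_lattice L -> noncollinear p q r ->
      lattice_complete L (triangle_hull p q r) -> lattice_reduced L (triangle_hull p q r)) /\
  (exists (L : pt -> Prop) (p q r : pt),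
      is_lattice L /\ noncollinear p q r /\
      lattice_reduced L (triangle_hull p q r) /\ ~ lattice_complete L (triangle_hull p q r)).
Proof.
  split.
  - exact complete_triangle_reduced.
  - exists Z2, (0, 0), (1, 0), (0, 1).
    split; [exact Z2_lattice|]. split; [exact std_noncollinear|].
    split; [exact std_triangle_reduced | exact std_triangle_not_complete].
Qed.
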